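(* Let $w\colon E\to(0,\infty)$ be a weight function on the edges of the hypercube graph, let $v$ be a game on $N$, and for each $i\in N$ let $v_{i,w}\in\ell^2(V)$ be the unique function with $v_{i,w}(\emptyset)=0$ and $\mathrm{d}v_{i,w} = P_w\mathrm{d}_i v$. Then: (a) $\sum_{i\in N} v_{i,w} = v$. (b) If $v(S\cup\{i\})-v(S)=0$ for all $S\subset N\setminus\{i\}$, then $v_{i,w}=0$. (c) If $\sigma$ is a permutation of $N$, then $(\sigma^*v)_{i,\sigma^*w} = \sigma^*(v_{\sigma(i),w})$ for all $i\in N$. In particular, if $\sigma$ swaps $i$ and $j$, $\sigma^*v=v$ and $\sigma^*w=w$, then $v_{i,w}=\sigma^*(v_{j,w})$. (d) For any two games $v,v'$ and $\alpha,\alpha'\in\mathbb{R}$, $(\alpha v+\alpha' v')_{i,w} = \alpha v_{i,w}+\alpha' v'_{i,w}$.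
   Context: Let $N$ be a finite set of players. A game is a function $v\colon 2^N\to\mathbb{R}$ with $v(\emptyset)=0$. The hypercube graph $G=(V,E)$ has $V=2^N$ and oriented edges $E=\{(S,S\cup\{i\}) : i\in N,\ S\subset N\setminus\{i\}\}$. $\ell^2(V)$ is the space of real functions on $V$. Given $w\colon E\to(0,\infty)$, $\ell^2_w(E)$ is the space of real functions on $E$ with inner product $\langle f,g\rangle_w=\sum_{e\in E}w(e)f(e)g(e)$. $\mathrm{d}\colon \ell^2(V)\to\ell^2_w(E)$ is $\mathrm{d}u(S,S\cup\{i\}) = u(S\cup\{i\})-u(S)$, with range $\mathcal{R}(\mathrm{d})$. For $i\in N$, $\mathrm{d}_i\colon\ell^2(V)\to\ell^2_w(E)$ is defined by $\mathrm{d}_i u(S,S\cup\{j\}) = u(S\cup\{i\})-u(S)$ if $j=i$ and $0$ if $j\ne i$. $P_w$ is the $\langle\cdot,\cdot\rangle_w$-orthogonal projection of $\ell^2_w(E)$ onto $\mathcal{R}(\mathrm{d})$. For a permutation $\sigma$ of $N$, $\sigma^*$ acts on vertex functions by $(\sigma^*u)(S)=u(\sigma(S))$ and on edge functions by $(\sigma^*f)(S,S\cup\{i\}) = f(\sigma(S),\sigma(S)\cup\{\sigma(i)\})$. *)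

From HB Require Import structures.
From mathcomp Require Import all_boot all_order all_algebra all_fingroup.
From Stdlib Require Import ClassicalEpsilon.
Set Implicit Arguments. Unset Strict Implicit. Unset Printing Implicit Defensive.
Import Order.TTheory GRing.Theory Num.Theory.
Local Open Scope ring_scope.

Section Hypercube.
Variables (R : realFieldType) (N : finType).

Definition vfun := {set N} -> R.
(* edge functions: f S i is the value on the oriented edge (S, S u {i}),
   meaningful only when i \notin S *)
Definition efun := {set N} -> N -> R.

Definition is_edge (S : {set N}) (i : N) : bool := i \notin S.

Definition is_game (v : vfun) : Prop := v set0 = 0.

Definition pos_weight (w : efun) : Prop := forall S i, is_edge S i -> 0 < w S i.

Definition eq_on_E (f g : efun) : Prop := forall S i, is_edge S i -> f S i = g S i.

Definition inner_w (w f g : efun) : R :=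
  \sum_(S : {set N}) \sum_(i in ~: S) w S i * f S i * g S i.

Definition dd (u : vfun) : efun := fun S i => u (S :|: [set i]) - u S.

Definition dd_i (i : N) (u : vfun) : efun :=
  fun S j => if j == i then u (S :|: [set i]) - u S else 0.

Definition in_range_d (f : efun) : Prop := exists u : vfun, eq_on_E f (dd u).

Definition is_proj (w f p : efun) : Prop :=
  in_range_d p /\ forall u : vfun, inner_w w (fun S i => f S i - p S i) (dd u) = 0.

Definition efun0 : efun := fun _ _ => 0.
Definition vfun0 : vfun := fun _ => 0.

(* P_w f (well defined, as an element of l^2_w(E), when w is positive) *)
Definition Pw (w f : efun) : efun := epsilon (inhabits efun0) (is_proj w f).

Definition player_comp (w : efun) (v : vfun) (i : N) : vfun :=
  epsilon (inhabits vfun0)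
    (fun u => u set0 = 0 /\ eq_on_E (dd u) (Pw w (dd_i i v))).

Definition pullV (s : {perm N}) (u : vfun) : vfun := fun S => u (s @: S).
Definition pullE (s : {perm N}) (f : efun) : efun := fun S i => f (s @: S) (s i).

End Hypercube.

(* P_w is linear and commutes with relabelling the players, and it is well defined
   because positive weights make <.,.>_w definite: the projection exists by Gram-Schmidt
   over the finitely many vertex indicators and is unique.  A coboundary determines its
   potential up to the value at the empty set.  Hence v_{i,w} inherits linearity and
   equivariance from P_w, d and d_i, and a null player has d_i v = 0.  Since
   d = sum_i d_i and P_w fixes dv, the potential sum_i v_{i,w} has coboundary dv and
   vanishes at the empty set, so it equals v. *)
From HB Require Import structures.
From mathcomp Require Import all_boot all_order all_algebra all_fingroup.
From mathcomp Require Import ring.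
From Stdlib Require Import ClassicalEpsilon FunctionalExtensionality.
Import Order.TTheory GRing.Theory Num.Theory.
Local Open Scope ring_scope.
Set Implicit Arguments. Unset Strict Implicit. Unset Printing Implicit Defensive.

Section Hypercube.
Variables (R : realFieldType) (N : finType).
Local Notation V := (vfun R N).
Local Notation E := (efun R N).

Lemma edge_funext (f g : E) : (forall S i, f S i = g S i) -> f = g.
Proof.
by move=> fg; apply: functional_extensionality => S;
  apply: functional_extensionality => i; exact: fg.
Qed.

Section InnerProduct.
Variable w : E.

Lemma eq_inner_w f f' g g' : eq_on_E f f' -> eq_on_E g g' ->
  inner_w w f g = inner_w w f' g'.
Proof.
move=> ff' gg'; apply: eq_bigr => S _; apply: eq_bigr => i; rewrite in_setC => iS.
by rewrite ff' ?gg'.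
Qed.

Lemma inner_wC f g : inner_w w f g = inner_w w g f.
Proof. by apply: eq_bigr => S _; apply: eq_bigr => i _; ring. Qed.

Lemma inner_wDl a b f g h :
  inner_w w (fun S i => a * f S i + b * g S i) h
  = a * inner_w w f h + b * inner_w w g h.
Proof.
rewrite /inner_w !mulr_sumr -big_split; apply: eq_bigr => S _ /=.
by rewrite !mulr_sumr -big_split /=; apply: eq_bigr => i _; ring.
Qed.

Lemma inner_wDr a b f g h :
  inner_w w h (fun S i => a * f S i + b * g S i)
  = a * inner_w w h f + b * inner_w w h g.
Proof. by rewrite inner_wC inner_wDl !(inner_wC _ h). Qed.

Lemma inner_w_eq0r f g : eq_on_E g (@efun0 R N) -> inner_w w f g = 0.
Proof.
move=> g0; rewrite (@eq_inner_w f f g (@efun0 R N)) // /inner_w big1 // => S _.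
by rewrite big1 // => i _; rewrite mulr0.
Qed.

Lemma inner_w_suml (I : finType) (F : I -> E) g :
  inner_w w (fun S j => \sum_(i : I) F i S j) g = \sum_(i : I) inner_w w (F i) g.
Proof.
rewrite /inner_w exchange_big; apply: eq_bigr => S _ /=.
rewrite exchange_big; apply: eq_bigr => j _ /=.
by rewrite mulr_sumr mulr_suml.
Qed.

Lemma inner_w_pull (s : {perm N}) f g :
  inner_w (pullE s w) (pullE s f) (pullE s g) = inner_w w f g.
Proof.
rewrite /inner_w [RHS](reindex_inj (imset_inj (@perm_inj _ s))).
apply: eq_bigr => S _; rewrite [RHS](reindex_inj (@perm_inj _ s)).
by apply: eq_bigl => i; rewrite !in_setC mem_imset //; exact: perm_inj.
Qed.

Hypothesis hw : pos_weight w.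

Lemma inner_w_eq0 f : inner_w w f f = 0 -> eq_on_E f (@efun0 R N).
Proof.
move=> ff0 S i iS.
have term_ge0 T j : j \in ~: T -> 0 <= w T j * f T j * f T j.
  by rewrite in_setC -mulrA -expr2 => jT; rewrite mulr_ge0 ?sqr_ge0 ?ltW ?hw.
have sumS0 : \sum_(j in ~: S) w S j * f S j * f S j = 0.
  by apply: (psumr_eq0P _ ff0) => // T _; exact: sumr_ge0 (term_ge0 T).
have := psumr_eq0P (term_ge0 S) sumS0 (i := i); rewrite in_setC (negbTE iS) => /(_ isT) /eqP.
by rewrite -mulrA mulf_eq0 gt_eqF ?hw // mulf_eq0 orbb => /eqP.
Qed.

(* With the convention x / 0 = 0 this holds also when g is null, since then g = 0 on E. *)
Lemma inner_w_line_residual h g :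
  inner_w w h g - inner_w w h g / inner_w w g g * inner_w w g g = 0.
Proof.
have [/inner_w_eq0 g0|gg_neq0] := eqVneq (inner_w w g g) 0; last first.
  by rewrite divfK ?subrr.
by rewrite inner_w_eq0r // !mul0r subrr.
Qed.

End InnerProduct.

Lemma inner_w_weight (w w' f g : E) : eq_on_E w w' -> inner_w w f g = inner_w w' f g.
Proof.
move=> ww'; apply: eq_bigr => S _; apply: eq_bigr => i; rewrite in_setC => iS.
by rewrite ww'.
Qed.

Lemma pos_weight_pull (s : {perm N}) (w : E) : pos_weight w -> pos_weight (pullE s w).
Proof. by move=> hw S i iS; apply: hw; rewrite /is_edge mem_imset //; exact: perm_inj. Qed.

Lemma dd_lin a b (x y : V) :
  dd (fun S => a * x S + b * y S) = fun S i => a * dd x S i + b * dd y S i.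
Proof. by apply: edge_funext => S i /=; rewrite /dd; ring. Qed.

Lemma dd_i_lin a b i (x y : V) :
  dd_i i (fun S => a * x S + b * y S) = fun S j => a * dd_i i x S j + b * dd_i i y S j.
Proof. by apply: edge_funext => S j /=; rewrite /dd_i; case: eqP => _; ring. Qed.

Lemma dd_sum (I : finType) (u : I -> V) :
  dd (fun S => \sum_(i : I) u i S) = fun S j => \sum_(i : I) dd (u i) S j.
Proof. by apply: edge_funext => S j /=; rewrite /dd sumrB. Qed.

Lemma sum_dd_i (v : V) : (fun S j => \sum_(i : N) dd_i i v S j) = dd v.
Proof.
apply: edge_funext => S j /=; rewrite (bigD1 j) //= big1 ?addr0 /dd_i ?eqxx //.
by move=> i ij; rewrite eq_sym (negbTE ij).
Qed.

Lemma dd_pull (s : {perm N}) (u : V) : dd (pullV s u) = pullE s (dd u).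
Proof. by apply: edge_funext => S j /=; rewrite /dd /pullV /pullE imsetU imset_set1. Qed.

Lemma dd_i_pull (s : {perm N}) i (v : V) : dd_i i (pullV s v) = pullE s (dd_i (s i) v).
Proof.
apply: edge_funext => S j /=; rewrite /dd_i /pullE /pullV (inj_eq (@perm_inj _ s)).
by rewrite imsetU imset_set1.
Qed.

Lemma pullVK (s : {perm N}) (u : V) : pullV s (pullV s^-1 u) = u.
Proof.
apply: functional_extensionality => S; rewrite /pullV -imset_comp.
by rewrite (eq_imset _ (permK s)) imset_id.
Qed.

Lemma dd_inj_set0 (u u' : V) : eq_on_E (dd u) (dd u') -> u set0 = u' set0 -> u =1 u'.
Proof.
move=> duu' u0 S; have [n] := ubnP #|S|; elim: n S => // n IH S.
rewrite ltnS => Sn; have [->|[i iS]] := set_0Vmem S; first exact: u0.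
have IHi := IH (S :\ i) (leq_trans (proper_card (properD1 iS)) Sn).
have := duu' (S :\ i) i; rewrite /is_edge setD11 /dd setUC setD1K // IHi.
by move=> /(_ isT) /(canRL (subrK _)); rewrite subrK.
Qed.

Section Projection.
Variable w : E.

Lemma is_proj_eq_on f f' p q : eq_on_E f f' -> eq_on_E p q ->
  is_proj w f p -> is_proj w f' q.
Proof.
move=> ff' pq [[u pu] fp]; split; first by exists u => S i iS; rewrite -pq ?pu.
by move=> x; rewrite -(fp x); apply: eq_inner_w => // S i iS; rewrite ff' ?pq.
Qed.

Lemma is_proj_weight w' f p : eq_on_E w w' -> is_proj w f p -> is_proj w' f p.
Proof. by move=> ww' [fR fp]; split=> // x; rewrite -(inner_w_weight _ _ ww') fp. Qed.

Lemma is_proj_dd u : is_proj w (dd u) (dd u).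
Proof.
split; first by exists u.
by move=> x; rewrite inner_wC inner_w_eq0r // => S i _; rewrite subrr.
Qed.

Lemma is_projD a b f g p q : is_proj w f p -> is_proj w g q ->
  is_proj w (fun S i => a * f S i + b * g S i) (fun S i => a * p S i + b * q S i).
Proof.
move=> [[x px] fp] [[y qy] gq]; split.
  by exists (fun S => a * x S + b * y S); rewrite dd_lin => S i iS; rewrite px ?qy.
move=> u; have -> : (fun S i => a * f S i + b * g S i - (a * p S i + b * q S i))
                  = fun S i => a * (f S i - p S i) + b * (g S i - q S i).
  by apply: edge_funext => S i /=; ring.
by rewrite inner_wDl fp gq !mulr0 addr0.
Qed.

Lemma is_proj_sum (I : finType) (f : I -> E) (u : I -> V) :
  (forall i, is_proj w (f i) (dd (u i))) ->
  is_proj w (fun S j => \sum_(i : I) f i S j) (dd (fun S => \sum_(i : I) u i S)).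
Proof.
move=> fu; split; first by exists (fun S => \sum_(i : I) u i S).
move=> x; rewrite dd_sum.
have -> : (fun S j => \sum_(i : I) f i S j - \sum_(i : I) dd (u i) S j)
          = fun S j => \sum_(i : I) (f i S j - dd (u i) S j).
  by apply: edge_funext => S j /=; rewrite [RHS]sumrB.
rewrite (inner_w_suml w (fun i S j => f i S j - dd (u i) S j)) big1 // => i _.
by case: (fu i).
Qed.

Lemma is_proj_pull (s : {perm N}) f p :
  is_proj w f p -> is_proj (pullE s w) (pullE s f) (pullE s p).
Proof.
move=> [[u pu] fp]; split.
  exists (pullV s u); rewrite dd_pull => S i iS; apply: pu.
  by rewrite /is_edge mem_imset //; exact: perm_inj.
by move=> x; rewrite -(pullVK s x) dd_pull -(fp (pullV s^-1 x)) -(inner_w_pull w s).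
Qed.

Hypothesis hw : pos_weight w.

Lemma is_proj_unique f p q : is_proj w f p -> is_proj w f q -> eq_on_E p q.
Proof.
move=> fp fq; have [[x px] _] := is_projD 1 (-1) fp fq.
have pq0 : inner_w w (fun S i => p S i - q S i) (fun S i => p S i - q S i) = 0.
  rewrite (@eq_inner_w w _ (fun S i => 1 * (f S i - q S i) + (-1) * (f S i - p S i))
                       _ (dd x)) => [|S i _|S i iS].
  - by rewrite inner_wDl fp.2 fq.2 !mulr0 addr0.
  - by ring.
  - by rewrite -px //; ring.
by move=> S i iS; apply: subr0_eq; exact: inner_w_eq0 pq0 S i iS.
Qed.

(* Gram-Schmidt: project successively onto the coboundaries of the functions
   supported on a growing list of vertices. *)
Definition supp_in (A : seq {set N}) (y : V) := forall S, S \notin A -> y S = 0.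

Definition orth_supp (A : seq {set N}) (h : E) :=
  forall y, supp_in A y -> inner_w w h (dd y) = 0.

Definition delta (T : {set N}) : V := fun S => if S == T then 1 else 0.

Lemma orth_supp_cons T A h :
  orth_supp A h -> inner_w w h (dd (delta T)) = 0 -> orth_supp (T :: A) h.
Proof.
move=> hA hT y yTA.
have -> : y = fun S => y T * delta T S + 1 * (y S - y T * delta T S).
  by apply: functional_extensionality => S; ring.
rewrite dd_lin inner_wDr hT hA ?mulr0 ?addr0 // => S; rewrite /delta.
case: eqP => [->|/eqP ST] SA; first by rewrite mulr1 subrr.
by rewrite mulr0 subr0 yTA // in_cons negb_or ST.
Qed.

Lemma proj_supp_exists A f :
  exists2 x, supp_in A x & orth_supp A (fun S i => f S i - dd x S i).
Proof.
elim: A f => [|T A IH] f.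
  exists (@vfun0 R N) => // y y0.
  by rewrite inner_w_eq0r // => S i _; rewrite /dd /efun0 !y0 ?subrr.
have [xf xfA xfO] := IH f; have [xg xgA xgO] := IH (dd (delta T)).
pose z S := delta T S - xg S.
pose h S i := f S i - dd xf S i.
pose t := inner_w w h (dd z) / inner_w w (dd z) (dd z).
have dz : dd z = fun S i => dd (delta T) S i - dd xg S i.
  by apply: edge_funext => S i /=; rewrite /dd /z; ring.
exists (fun S => 1 * xf S + t * z S).
  move=> S; rewrite in_cons negb_or => /andP[/negbTE ST SA].
  by rewrite /z /delta ST xfA ?xgA // subr0 !mulr0 addr0.
have -> : (fun S i => f S i - dd (fun S => 1 * xf S + t * z S) S i)
          = fun S i => 1 * h S i + (- t) * dd z S i.
  by apply: edge_funext => S i /=; rewrite /h /dd; ring.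
have hA : orth_supp A (fun S i => 1 * h S i + (- t) * dd z S i).
  by move=> y yA; rewrite inner_wDl xfO // dz xgO // !mulr0 addr0.
apply: orth_supp_cons => //.
have -> : dd (delta T) = fun S i => 1 * dd xg S i + 1 * dd z S i.
  by apply: edge_funext => S i /=; rewrite dz; ring.
rewrite inner_wDr hA // inner_wDl !mul1r mulNr -/t.
by rewrite (inner_w_line_residual hw) add0r.
Qed.

Lemma is_proj_exists f : exists p, is_proj w f p.
Proof.
have [x _ xO] := proj_supp_exists (enum {set N}) f.
by exists (dd x); split; [exists x | move=> y; apply: xO => S; rewrite mem_enum].
Qed.

Lemma Pw_is_proj f : is_proj w f (Pw w f).
Proof. exact: epsilon_spec (is_proj_exists f). Qed.

Lemma player_comp_spec (v : V) i :
  player_comp w v i set0 = 0 /\ is_proj w (dd_i i v) (dd (player_comp w v i)).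
Proof.
have fP := Pw_is_proj (dd_i i v); have [[u Pu] _] := fP.
have ex_pc : exists u : V, u set0 = 0 /\ eq_on_E (dd u) (Pw w (dd_i i v)).
  exists (fun S => u S - u set0); split; first by rewrite subrr.
  by move=> S j Sj; rewrite Pu // /dd; ring.
have [pc0 dpc] := epsilon_spec (inhabits (@vfun0 R N)) _ ex_pc.
by split=> //; apply: is_proj_eq_on fP => // S j Sj; rewrite dpc.
Qed.

Lemma player_compE (v : V) i (u : V) : u set0 = 0 -> is_proj w (dd_i i v) (dd u) ->
  player_comp w v i =1 u.
Proof.
move=> u0 up; have [pc0 pcp] := player_comp_spec v i.
by apply: dd_inj_set0; [exact: is_proj_unique pcp up | rewrite pc0 u0].
Qed.

Lemma sum_player_comp (v : V) :
  is_game v -> (fun S => \sum_(i : N) player_comp w v i S) =1 v.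
Proof.
move=> v0; apply/fsym/dd_inj_set0; last first.
  by rewrite v0 big1 // => i _; case: (player_comp_spec v i).
apply: is_proj_unique (is_proj_dd v) _.
by rewrite -sum_dd_i; apply: is_proj_sum => i; case: (player_comp_spec v i).
Qed.

Lemma player_comp_null (v : V) (i : N) :
  (forall S : {set N}, i \notin S -> v (S :|: [set i]) - v S = 0) ->
  player_comp w v i =1 @vfun0 R N.
Proof.
move=> null; apply: player_compE => //.
apply: is_proj_eq_on (is_proj_dd (@vfun0 R N)) => // S j jS.
by rewrite /dd_i /dd /vfun0 subrr; case: eqP => // ji; rewrite null -?ji.
Qed.

Lemma player_comp_lin (v v' : V) a a' i :
  player_comp w (fun T => a * v T + a' * v' T) i
  =1 fun S => a * player_comp w v i S + a' * player_comp w v' i S.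
Proof.
have [pc0 pcp] := player_comp_spec v i; have [pc0' pcp'] := player_comp_spec v' i.
apply: player_compE; first by rewrite pc0 pc0' !mulr0 addr0.
by rewrite dd_i_lin dd_lin; exact: is_projD.
Qed.

End Projection.

Lemma player_comp_pull (w : E) (s : {perm N}) (v : V) i : pos_weight w ->
  player_comp (pullE s w) (pullV s v) i =1 pullV s (player_comp w v (s i)).
Proof.
move=> hw; have [pc0 pcp] := player_comp_spec hw v (s i).
apply: (player_compE (pos_weight_pull s hw)); first by rewrite /pullV imset0.
by rewrite dd_i_pull dd_pull; exact: is_proj_pull.
Qed.

Lemma eq_player_comp_weight (w w' : E) (v : V) i : pos_weight w -> eq_on_E w w' ->
  player_comp w v i =1 player_comp w' v i.
Proof.
move=> hw ww'; have hw' : pos_weight w' by move=> S j Sj; rewrite -ww' ?hw.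
have [pc0 pcp] := player_comp_spec hw v i.
by move=> S; rewrite (player_compE hw' pc0 (is_proj_weight ww' pcp)).
Qed.

End Hypercube.

Theorem theorem4p1 (R : realFieldType) (N : finType) (w : efun R N)
  (hw : pos_weight w) :
  (forall v : vfun R N, is_game v ->
     forall S : {set N}, \sum_(i : N) (player_comp w v i S) = v S)
  /\
  (forall (v : vfun R N) (i : N), is_game v ->
     (forall S : {set N}, i \notin S -> v (S :|: [set i]) - v S = 0) ->
     forall S : {set N}, player_comp w v i S = 0)
  /\
  (forall (v : vfun R N) (s : {perm N}), is_game v ->
     forall (i : N) (S : {set N}),
       player_comp (pullE s w) (pullV s v) i S = pullV s (player_comp w v (s i)) S)
  /\
  (forall (v : vfun R N) (i j : N), is_game v ->
     (forall S : {set N}, pullV (tperm i j) v S = v S) ->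
     eq_on_E (pullE (tperm i j) w) w ->
     forall S : {set N}, player_comp w v i S = pullV (tperm i j) (player_comp w v j) S)
  /\
  (forall (v v' : vfun R N) (a a' : R) (i : N), is_game v -> is_game v' ->
     forall S : {set N},
       player_comp w (fun T => a * v T + a' * v' T) i S
       = a * player_comp w v i S + a' * player_comp w v' i S).
Proof.
split; first by move=> v v0 S; exact: sum_player_comp.
split; first by move=> v i _ null S; exact: player_comp_null.
split; first by move=> v s _ i S; exact: player_comp_pull.
split; last by move=> v v' a a' i _ _ S; exact: player_comp_lin.
move=> v i j _ vsym wsym S.
have vE : pullV (tperm i j) v = v by exact: functional_extensionality.
have wE : eq_on_E w (pullE (tperm i j) w) by move=> T k Tk; rewrite wsym.
rewrite -{1}vE (eq_player_comp_weight _ i hw wE) player_comp_pull //.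
by rewrite tpermL.
Qed.
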